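(* Let $z_0\in\mathbb{R}^n$ be a row vector with $z_0[i]\ge0$ for $i\in\mathcal{V}$, $z_0[(i,j)]=0$ for $(i,j)\in\mathcal{E}$, and $\sum_j z_0[j]>0$, and define $z_k=z_{k-1}M_k$ for $k\ge1$. Let $\mu_z$ satisfy $0<\mu_z\le\sum_j z_0[j]$, let $c=\min\{M[a,b]: M\in\mathcal{M},\,M[a,b]>0\}$, let $l$ be a positive integer such that for every $i\in\mathcal{V}$ there exist $l$ matrices in $\mathcal{M}$ (possibly repeated) whose product, in some order, has all entries of its column indexed by $i$ strictly positive, and set $\mu=\mu_z c^l/n$. Then for each $i\in\mathcal{V}$, with probability $1$, $z_k[i]\ge\mu$ for infinitely many $k$.
   Context: Let $\mathcal{G}=(\mathcal{V},\mathcal{E})$ be a strongly connected directed graph with $\mathcal{V}=\{1,\dots,m\}$, with a self-loop $(i,i)\in\mathcal{E}$ at every node. Let $\mathcal{O}_i=\{j:(i,j)\in\mathcal{E}\}$ and $D_i=|\mathcal{O}_i|$. At each time step $k\ge1$ each link $(i,j)\in\mathcal{E}$ is reliable with probability $q_{ij}\in(0,1]$, independently across links and across time steps; let $X_k[i,j]=1$ if $(i,j)$ is reliable at step $k$ and $0$ otherwise. Let $n=m+|\mathcal{E}|$ and index vector entries and rows/columns of $n\times n$ matrices by $\mathcal{V}\cup\mathcal{E}$. The random matrix $M_k$ is defined by: for $i\in\mathcal{V}$ and $(i,j)\in\mathcal{E}$, $M_k[i,j]=X_k[i,j]/D_i$ and $M_k[i,(i,j)]=(1-X_k[i,j])/D_i$,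 all other entries of row $i$ being $0$; for $(i,j)\in\mathcal{E}$, $M_k[(i,j),j]=X_k[i,j]$ and $M_k[(i,j),(i,j)]=1-X_k[i,j]$, all other entries of row $(i,j)$ being $0$. $\mathcal{M}$ denotes the finite set of all $2^{|\mathcal{E}|}$ matrices obtainable this way. *)

From HB Require Import structures.
From mathcomp Require Import all_boot all_order all_algebra.
From mathcomp Require Import all_classical all_reals all_analysis.
Set Implicit Arguments. Unset Strict Implicit. Unset Printing Implicit Defensive.
Import Order.TTheory GRing.Theory Num.Theory.
Local Open Scope ring_scope.
Local Open Scope classical_set_scope.

Definition edge_t (m : nat) (E : {set 'I_m * 'I_m}) : finType :=
  {e : 'I_m * 'I_m | e \in E}.

(* Index set V \cup E (disjoint union): inl i for nodes, inr e for links. *)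
Definition idx (m : nat) (E : {set 'I_m * 'I_m}) : finType :=
  ('I_m + edge_t E)%type.

Definition outdeg (m : nat) (E : {set 'I_m * 'I_m}) (i : 'I_m) : nat :=
  #|[set j | (i, j) \in E]|.

(* The matrix M determined by a reliability pattern x : E -> bool
   (x e = true iff link e is reliable). Matrices are functions idx -> idx -> R. *)
Definition Mmat (R : realType) (m : nat) (E : {set 'I_m * 'I_m})
  (x : {ffun edge_t E -> bool}) (a b : idx E) : R :=
  match a, b with
  | inl i, inl j =>
      match @insub _ (fun e => e \in E) (edge_t E) (i, j) with
      | Some e => (x e)%:R / (outdeg E i)%:R
      | None => 0
      end
  | inl i, inr e => if (val e).1 == i then (~~ x e)%:R / (outdeg E i)%:R else 0
  | inr e, inl j => if (val e).2 == j then (x e)%:R else 0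
  | inr e, inr e' => if e == e' then (~~ x e)%:R else 0
  end.

Definition vmul (R : realType) (I : finType) (z : I -> R) (M : I -> I -> R) : I -> R :=
  fun b => \sum_(a : I) z a * M a b.
Definition mmul (R : realType) (I : finType) (A B : I -> I -> R) : I -> I -> R :=
  fun a b => \sum_(c : I) A a c * B c b.
Definition mid (R : realType) (I : finType) : I -> I -> R :=
  fun a b => (a == b)%:R.
Definition mprod (R : realType) (I : finType) (s : seq (I -> I -> R)) : I -> I -> R :=
  foldr (@mmul R I) (@mid R I) s.

(* c = min { M[a,b] : M in the set of all 2^|E| matrices, M[a,b] > 0 }.
   All entries lie in [0,1], so 1 is a neutral element for this min. *)
Definition cmin (R : realType) (m : nat) (E : {set 'I_m * 'I_m}) : R :=
  \big[Num.min/1]_(x : {ffun edge_t E -> bool})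
    \big[Num.min/1]_(a : idx E)
      \big[Num.min/1]_(b : idx E | 0 < Mmat R x a b) Mmat R x a b.

(* z_0 = z0, z_k = z_{k-1} M_k, where M_{k} = Mmat (X (k-1) t). *)
Fixpoint zseq (R : realType) (m : nat) (E : {set 'I_m * 'I_m})
  (z0 : idx E -> R) (Xs : nat -> {ffun edge_t E -> bool}) (k : nat) : idx E -> R :=
  match k with
  | 0 => z0
  | k'.+1 => vmul (zseq z0 Xs k') (Mmat R (Xs k'))
  end.

Definition indep_links (d : measure_display) (T : measurableType d) (R : realType)
  (P : probability T R) (m : nat) (E : {set 'I_m * 'I_m})
  (X : nat -> T -> {ffun edge_t E -> bool}) : Prop :=
  forall (F : seq (nat * edge_t E)) (b : nat * edge_t E -> bool),
    uniq F ->
    P [set t | forall p, p \in F -> X p.1 t p.2 = b p] =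
    (\prod_(p <- F) P [set t | X p.1 t p.2 = b p])%E.

(* Every matrix of the family is row-stochastic, so z_k stays nonnegative with
   constant mass.  A positive entry of a product of l such matrices is
   witnessed by a path of positive entries, and every such path ending at a
   node can be rerouted through the matrix in which all links are reliable,
   the self-loops absorbing the steps spent waiting on an unreliable link.
   Hence, whenever all links are reliable during l consecutive steps, the
   entry z[i] afterwards is at least c^l times the mass, hence at least mu.
   By independence, none of J disjoint blocks of l steps is all-reliable with
   probability (1 - p)^J, where p > 0 is the probability of one such block;
   letting J grow, after every time N such a block occurs almost surely. *)
From HB Require Import structures.
From mathcomp Require Import all_boot all_order all_algebra.
From mathcomp Require Import all_classical all_reals all_analysis.
From mathcomp Require Import ring zify.
Import Order.TTheory GRing.Theory Num.Theory.
Local Open Scope ring_scope.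
Local Open Scope classical_set_scope.
Set Implicit Arguments. Unset Strict Implicit.

Lemma map_iota0_nseq (T : Type) (f : nat -> T) (x : T) l :
  (forall j, (j < l)%N -> f j = x) -> [seq f j | j <- iota 0 l] = nseq l x.
Proof.
move=> fx; apply: (@eq_from_nth _ x); rewrite size_map size_iota ?size_nseq // => j jl.
by rewrite (nth_map 0) ?size_iota // nth_iota // nth_nseq jl fx.
Qed.

Section MatrixProducts.
Variables (R : realType) (I : finType).

Lemma vmul_mmul (z : I -> R) (A B : I -> I -> R) :
  vmul (vmul z A) B = vmul z (mmul A B).
Proof.
apply/funext => b; rewrite /vmul /mmul.
under eq_bigr do rewrite big_distrl /=.
rewrite exchange_big /=; apply: eq_bigr => a _.
by rewrite big_distrr /=; apply: eq_bigr => c _; rewrite mulrA.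
Qed.

Lemma vmul_mid (z : I -> R) : vmul z (@mid R I) = z.
Proof.
apply/funext => b; rewrite /vmul /mid (bigD1 b) //= eqxx mulr1 big1 ?addr0 //.
by move=> a /negbTE ->; rewrite mulr0.
Qed.

Variables (S : Type) (M : S -> I -> I -> R).
Hypothesis M_ge0 : forall x a b, 0 <= M x a b.

Fixpoint pos_path (s : seq S) (a b : I) : Prop :=
  if s is x :: s' then exists2 c, 0 < M x a c & pos_path s' c b else a = b.

Lemma mprod_ge0 s a b : 0 <= mprod [seq M x | x <- s] a b.
Proof.
elim: s a b => [|x s IHs] a b /=; first by rewrite /mid ler0n.
by apply: sumr_ge0 => c _; rewrite mulr_ge0.
Qed.

Lemma mprod_gt0_pos_path s a b : 0 < mprod [seq M x | x <- s] a b -> pos_path s a b.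
Proof.
elim: s a b => [|x s IHs] a b /=; first by rewrite /mid; case: eqP; rewrite ?ltxx.
move=> /lt0r_neq0/eqP/psumr_neq0P[c _ | c /= Pc]; first by rewrite mulr_ge0 ?mprod_ge0.
have Mac : 0 < M x a c.
  by rewrite lt_def M_ge0 andbT; apply: contraTneq Pc => ->; rewrite mul0r ltxx.
by exists c => //; apply: IHs; rewrite -(pmulr_rgt0 _ Mac).
Qed.

Variable c : R.
Hypotheses (c_ge0 : 0 <= c) (M_ge_c : forall x a b, 0 < M x a b -> c <= M x a b).

Lemma pos_path_mprod_ge s a b : pos_path s a b -> c ^+ size s <= mprod [seq M x | x <- s] a b.
Proof.
elim: s a b => [|x s IHs] a b /= => [->|[e Mae path_eb]]; first by rewrite /mid eqxx.
rewrite /mmul (bigD1 e) //= exprS; apply: ler_wpDr.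
  by apply: sumr_ge0 => e' _; rewrite mulr_ge0 ?mprod_ge0.
by apply: ler_pM; rewrite ?exprn_ge0 ?M_ge_c ?IHs.
Qed.

End MatrixProducts.

Definition all_reliable m (E : {set 'I_m * 'I_m}) : {ffun edge_t E -> bool} :=
  [ffun=> true].

Section ReliabilityMatrices.
Variables (R : realType) (m : nat) (E : {set 'I_m * 'I_m}).
Local Notation M := (@Mmat R m E).
Implicit Types (z : idx E -> R) (Xs : nat -> {ffun edge_t E -> bool}).

Lemma Mmat_ge0 x a b : 0 <= M x a b.
Proof.
case: a b => [i [j|e] | e [j|e']] /=.
- by case: insubP => // e _ _; rewrite divr_ge0.
- by case: ifP => // _; rewrite divr_ge0.
- by case: ifP.
- by case: ifP.
Qed.

Lemma cmin_ge0 : 0 <= cmin R E.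
Proof.
have min_ge0 (J : finType) (P : pred J) (F : J -> R) :
    (forall j, P j -> 0 <= F j) -> 0 <= \big[Num.min/1]_(j | P j) F j.
  by move=> F_ge0; elim/big_ind: _ => // u v u0 v0; rewrite le_min u0 v0.
by do 2!apply: (min_ge0) => ? _; apply: (min_ge0) => ? /ltW.
Qed.

Lemma cmin_le_Mmat x a b : 0 < M x a b -> cmin R E <= M x a b.
Proof.
move=> Mab; rewrite /cmin (bigD1 x) //= ge_min (bigD1 a) //= ge_min.
by rewrite (bigD1 b) //= ge_min lexx.
Qed.

Lemma Mmat_gt0_cases x a c :
  0 < M x a c ->
  match a, c with
  | inl u, inl v => is_true ((u, v) \in E)
  | inl u, inr e => (val e).1 = u
  | inr e, inl v => (val e).2 = v
  | inr e, inr e' => e = e' /\ ~~ x e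
  end.
Proof.
case: a c => [u [v|e'] | e [v|e']] /=.
- by case: insubP => [e0 _ <- _|_]; rewrite ?ltxx ?(valP e0).
- by case: eqP; rewrite ?ltxx.
- by case: eqP; rewrite ?ltxx.
- by case: eqP => [<-|_]; case: (x e); rewrite ?ltxx.
Qed.

Lemma sum_insub_out_edges (g : edge_t E -> R) u :
  \sum_(j : 'I_m) match @insub _ (fun e => e \in E) (edge_t E) (u, j) with
                  | Some e => g e | None => 0 end =
  \sum_(e : edge_t E | (val e).1 == u) g e.
Proof.
rewrite (partition_big (fun e : edge_t E => (val e).2) xpredT) //.
apply: eq_bigr => j _; case: insubP => [e0 _ e0E | Ej].
- rewrite (big_pred1 e0) // => e /=; apply/andP/eqP => [[/eqP e1 /eqP e2] | ->].
    by apply/val_inj; rewrite e0E [val e]surjective_pairing e1 e2.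
  by rewrite e0E !eqxx.
- rewrite big_pred0 // => e /=; apply/negP => /andP[/eqP e1 /eqP e2].
  by move/negP: Ej; apply; rewrite -e1 -e2 -surjective_pairing (valP e).
Qed.

Lemma outdeg_out_edges u :
  (outdeg E u)%:R = \sum_(e : edge_t E | (val e).1 == u) 1 :> R.
Proof.
rewrite -(sum_insub_out_edges (fun=> 1)) /outdeg -sum1_card natr_sum big_mkcond.
apply: eq_bigr => j _.
have -> : (j \in [set j0 | (u, j0) \in E]) = ((u, j) \in E) by apply/idP/idP; rewrite in_setE.
by case: insubP => [e -> _ | /negbTE ->].
Qed.

Lemma zseq_ge0 z Xs k a : (forall a, 0 <= z a) -> 0 <= zseq z Xs k a.
Proof.
move=> z_ge0; elim: k a => [|k IHk] a //=.
by apply: sumr_ge0 => b _; rewrite mulr_ge0 ?Mmat_ge0.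
Qed.

Lemma eq_zseq z Xs Ys k :
  (forall j, (j < k)%N -> Xs j = Ys j) -> zseq z Xs k = zseq z Ys k.
Proof. by elim: k => //= k IHk XY; rewrite IHk ?XY // => j /ltnW /XY. Qed.

Lemma zseq_addn z Xs k r :
  zseq z Xs (k + r) = zseq (zseq z Xs k) (fun j => Xs (k + j)%N) r.
Proof. by elim: r => [|r IHr]; rewrite ?addn0 // addnS /= IHr. Qed.

Lemma zseq_mprod r : forall z Xs,
  zseq z Xs r = vmul z (mprod [seq M (Xs j) | j <- iota 0 r]).
Proof.
elim: r => [|r IHr] z Xs; first by rewrite vmul_mid.
have -> : zseq z Xs r.+1 = zseq (vmul z (M (Xs 0%N))) (Xs \o succn) r.
  by elim: r {IHr} => //= r ->.
by rewrite IHr vmul_mmul /= (iotaDl 1 0 r) -map_comp.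
Qed.

Hypothesis self_loops : forall i : 'I_m, (i, i) \in E.

Lemma Mmat_row_sum x a : \sum_b M x a b = 1.
Proof.
rewrite /idx big_sumType /=; case: a => [u|e] /=.
- rewrite (sum_insub_out_edges (fun e => (x e)%:R / (outdeg E u)%:R)).
  rewrite -big_mkcond /= -big_split /=.
  have outdeg_neq0 : (outdeg E u)%:R != 0 :> R.
    by rewrite pnatr_eq0 -lt0n; apply/card_gt0P; exists u; rewrite in_setE /= self_loops.
  rewrite (eq_bigr (fun=> 1 / (outdeg E u)%:R)); last first.
    by move=> e _; rewrite -mulrDl; case: (x e); rewrite /= ?add0r ?addr0.
  by rewrite -big_distrl -outdeg_out_edges; apply: mulfV.
- rewrite -big_mkcond /= (big_pred1 (val e).2); last by move=> j; rewrite eq_sym.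
  rewrite -big_mkcond /= (big_pred1 e); last by move=> e'; rewrite eq_sym.
  by case: (x e); rewrite /= ?add0r ?addr0.
Qed.

Lemma zseq_mass z Xs k : \sum_a zseq z Xs k a = \sum_a z a.
Proof.
elim: k => [|k IHk] //=; rewrite -IHk /vmul exchange_big /=.
by apply: eq_bigr => a _; rewrite -big_distrr /= Mmat_row_sum mulr1.
Qed.

Local Notation reliable_seq k := (nseq k (all_reliable E)).

Lemma Mmat_all_reliable_edge u v :
  (u, v) \in E -> 0 < M (all_reliable E) (inl u) (inl v).
Proof.
move=> Euv /=; case: insubP => [e _ _|]; last by rewrite Euv.
rewrite ffunE divr_gt0 ?ltr01 // ltr0n.
by apply/card_gt0P; exists v; rewrite in_setE.
Qed.

Lemma Mmat_all_reliable_head (e : edge_t E) :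
  0 < M (all_reliable E) (inr e) (inl (val e).2).
Proof. by rewrite /= eqxx ffunE ltr01. Qed.

Lemma pos_path_reliable_waitS k v b :
  pos_path M (reliable_seq k) (inl v) b -> pos_path M (reliable_seq k.+1) (inl v) b.
Proof. by exists (inl v) => //; apply: Mmat_all_reliable_edge. Qed.

Lemma pos_path_reliable_inr k (e : edge_t E) b :
  pos_path M (reliable_seq k) (inr e) (inl b) ->
  exists2 k', k = k'.+1 & pos_path M (reliable_seq k') (inl (val e).2) (inl b).
Proof.
case: k => [//|k] [c Mec path_cb]; exists k => //.
case: c Mec path_cb => [v|e'] /Mmat_gt0_cases; first by move=> <-.
by rewrite ffunE => -[].
Qed.

(* The all-reliable matrix moves a packet along the same links, except that a
   packet waiting in a link buffer is delivered at once and then waits at the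
   receiving node through its self-loop. *)
Lemma pos_path_all_reliable s a i :
  pos_path M s a (inl i) -> pos_path M (reliable_seq (size s)) a (inl i).
Proof.
elim: s a => [|x s IHs] a //= [c Mac /IHs path_c]; move: Mac path_c.
case: a c => [u [v|e'] | e [v|e']] /Mmat_gt0_cases.
- by exists (inl v) => //; apply: Mmat_all_reliable_edge.
- move=> e'u /pos_path_reliable_inr[k -> path_k]; exists (inl (val e').2).
    by apply: Mmat_all_reliable_edge; rewrite -e'u -surjective_pairing (valP e').
  exact: pos_path_reliable_waitS.
- by move=> <- path_v; exists (inl (val e).2) => //; apply: Mmat_all_reliable_head.
- move=> [<- _] /pos_path_reliable_inr[k -> path_k]; exists (inl (val e).2).
    exact: Mmat_all_reliable_head.
  exact: pos_path_reliable_waitS.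
Qed.

Lemma zseq_after_reliable_block z Xs k l i :
  (forall a, 0 <= z a) ->
  (forall a, pos_path M (reliable_seq l) a (inl i)) ->
  (forall r, (r < l)%N -> Xs (k + r)%N = all_reliable E) ->
  cmin R E ^+ l * \sum_a z a <= zseq z Xs (k + l) (inl i).
Proof.
move=> z_ge0 reach_i Xs_reliable.
rewrite zseq_addn zseq_mprod (@map_iota0_nseq _ _ (M (all_reliable E))); last first.
  by move=> r /Xs_reliable ->.
rewrite -map_nseq /vmul -(zseq_mass z Xs k) big_distrr /=.
apply: ler_sum => a _; rewrite mulrC ler_wpM2l ?zseq_ge0 //.
rewrite -{1}(size_nseq l (all_reliable E)).
exact: (@pos_path_mprod_ge _ _ _ M Mmat_ge0 _ cmin_ge0 (@cmin_le_Mmat) _ _ _ (reach_i a)).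
Qed.

End ReliabilityMatrices.

Section LinkEvents.
Variables (d : measure_display) (T : measurableType d) (m : nat) (E : {set 'I_m * 'I_m}).
Variable X : nat -> T -> {ffun edge_t E -> bool}.
Hypothesis X_measurable : forall k e, measurable [set t | X k t e].

Definition cylinder (F : seq (nat * edge_t E)) (b : nat * edge_t E -> bool) : set T :=
  [set t | forall p, p \in F -> X p.1 t p.2 = b p].

Lemma cylinder_nil b : cylinder [::] b = setT.
Proof. by apply/seteqP; split => t. Qed.

Lemma cylinder_cat F1 F2 b1 :
  (forall p, p \in F1 -> p \notin F2) ->
  cylinder (F1 ++ F2) (fun p => if p \in F2 then true else b1 p) =
  cylinder F1 b1 `&` cylinder F2 (fun=> true).
Proof.
move=> disj; apply/seteqP; split => t; rewrite /cylinder /=.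
- move=> h; split => p Fp; move: (h p); rewrite mem_cat Fp ?orbT => /(_ isT) //.
  by rewrite (negbTE (disj p Fp)).
- move=> [h1 h2] p; rewrite mem_cat => /orP[Fp|F2p]; last by rewrite F2p; apply: h2.
  by rewrite (negbTE (disj p Fp)); apply: h1.
Qed.

Lemma measurable_cylinder F b : measurable (cylinder F b).
Proof.
elim: F => [|p F IHF]; first by rewrite cylinder_nil.
have -> : cylinder (p :: F) b = [set t | X p.1 t p.2 = b p] `&` cylinder F b.
  apply/seteqP; split => t /=.
  - by move=> h; split => [|q Fq]; apply: h; rewrite in_cons ?eqxx ?Fq ?orbT.
  - by move=> [h1 h2] q; rewrite in_cons => /orP[/eqP ->|/h2].
apply: measurableI => //; case: (b p); first exact: X_measurable.
rewrite (_ : [set t | _] = ~` [set t | X p.1 t p.2]); first exact/measurableC.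
by apply/seteqP; split => t /=; case: (X p.1 t p.2).
Qed.

Lemma measurable_X_eq k v : measurable [set t | X k t = v].
Proof.
rewrite (_ : [set t | _] = cylinder [seq (k, e) | e <- enum (edge_t E)] (fun p => v p.2)).
  exact: measurable_cylinder.
apply/seteqP; split => t /=; first by move=> <- p /mapP[e _ ->].
by move=> h; apply/ffunP => e; apply: (h (k, e)); apply/mapP; exists e; rewrite ?mem_enum.
Qed.

(* Induction on [k]: condition on the value [v] of [X k]; once [X k] is frozen
   to [v], the event only depends on the first [k] steps. *)
Lemma measurable_prefix_event k (Q : (nat -> {ffun edge_t E -> bool}) -> Prop) :
  (forall f g, (forall j, (j < k)%N -> f j = g j) -> Q f -> Q g) ->
  measurable [set t | Q (X^~ t)].
Proof.
elim: k Q => [|k IHk] Q Qext.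
  have [Qf|nQf] := pselect (Q (fun=> all_reliable E)).
    rewrite (_ : [set t | _] = setT) //; apply/seteqP; split => t // _.
    exact: Qext Qf.
  rewrite (_ : [set t | _] = set0) //; apply/seteqP; split => t //= Qt.
  by apply: nQf; apply: Qext Qt.
pose Q_at v f := Q (fun j => if j == k then v else f j).
have -> : [set t | Q (X^~ t)] = \bigcup_(v in [set: {ffun edge_t E -> bool}])
    ([set t | X k t = v] `&` [set t | Q_at v (X^~ t)]).
  apply/seteqP; split => t /=.
  - move=> Qt; exists (X k t) => //; split => //.
    by apply: Qext Qt => j _; case: eqP => // ->.
  - by move=> [v _ [<- Qv]]; apply: Qext Qv => j _; case: eqP => // ->.
apply: fin_bigcup_measurable; first exact: finite_finset.
move=> v _; apply: measurableI; first exact: measurable_X_eq.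
apply: IHk => f g fg; apply: Qext => j jk; case: eqP => // /eqP jNk.
by apply: fg; rewrite ltn_neqAle jNk -ltnS.
Qed.

Definition block_links (l k0 : nat) : seq (nat * edge_t E) :=
  [seq ((k0 + val r.1)%N, r.2) | r <- enum {: 'I_l * edge_t E}].

Lemma block_links_uniq l k0 : uniq (block_links l k0).
Proof.
rewrite map_inj_uniq ?enum_uniq // => -[a e] [a' e'] /= [/addnI aa' <-].
by congr pair; apply: ord_inj.
Qed.

Lemma mem_block_links l k0 p : p \in block_links l k0 -> (k0 <= p.1 < k0 + l)%N.
Proof. by move=> /mapP[[a e] _ ->] /=; rewrite leq_addr ltn_add2l ltn_ord. Qed.

Definition reliable_block (l k0 : nat) : set T := cylinder (block_links l k0) (fun=> true).

Lemma reliable_blockP l k0 t :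
  reliable_block l k0 t -> forall r, (r < l)%N -> X (k0 + r)%N t = all_reliable E.
Proof.
move=> h r rl; apply/ffunP => e; rewrite ffunE; apply: (h ((k0 + r)%N, e)).
by apply/mapP; exists (Ordinal rl, e); rewrite ?mem_enum.
Qed.

Definition no_reliable_block (l N J : nat) : set T :=
  [set t | forall j, (j < J)%N -> ~ reliable_block l (N + j * l) t].

Lemma no_reliable_block0 l N : no_reliable_block l N 0 = setT.
Proof. by apply/seteqP; split => t. Qed.

Lemma no_reliable_blockS l N J :
  no_reliable_block l N J.+1 = no_reliable_block l N J `&` ~` reliable_block l (N + J * l).
Proof.
apply/seteqP; split => t /=.
- by move=> h; split => [j jJ|]; apply: h => //; apply: ltnW.
- by move=> [h1 h2] j; rewrite ltnS leq_eqVlt => /orP[/eqP ->|/h1].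
Qed.

Lemma measurable_no_reliable_block l N J : measurable (no_reliable_block l N J).
Proof.
elim: J => [|J IHJ]; first by rewrite no_reliable_block0.
by rewrite no_reliable_blockS; apply: measurableI => //; apply/measurableC/measurable_cylinder.
Qed.

End LinkEvents.

Section BlockProbabilities.
Variables (d : measure_display) (T : measurableType d) (R : realType) (P : probability T R).
Variables (m : nat) (E : {set 'I_m * 'I_m}) (q : edge_t E -> R).
Variable X : nat -> T -> {ffun edge_t E -> bool}.
Hypotheses (X_measurable : forall k e, measurable [set t | X k t e])
  (P_X : forall k e, P [set t | X k t e] = (q e)%:E) (X_indep : indep_links P X).

Definition block_reliability (l : nat) : R := \prod_(r <- enum {: 'I_l * edge_t E}) q r.2.

Lemma P_reliable_block l k0 : P (reliable_block X l k0) = (block_reliability l)%:E.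
Proof.
rewrite /reliable_block /cylinder X_indep ?block_links_uniq // big_map -prodEFin.
by apply: eq_bigr => r _; apply: P_X.
Qed.

Lemma P_cylinder_cat F1 F2 b1 :
  uniq F1 -> uniq F2 -> (forall p, p \in F1 -> p \notin F2) ->
  P (cylinder X (F1 ++ F2) (fun p => if p \in F2 then true else b1 p)) =
  (P (cylinder X F1 b1) * P (cylinder X F2 (fun=> true)))%E.
Proof.
move=> F1_uniq F2_uniq disj.
have F12_uniq : uniq (F1 ++ F2).
  rewrite cat_uniq F1_uniq F2_uniq andbT; apply/hasPn => p F2p; apply/negP => F1p.
  by move: (disj p F1p); rewrite F2p.
rewrite /cylinder !X_indep // big_cat /=; congr (_ * _)%E.
- by apply: eq_big_seq => p F1p; rewrite (negbTE (disj p F1p)).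
- by apply: eq_big_seq => p ->.
Qed.

(* The cylinder lies after the J blocks, so it is independent of them; the
   induction peels off the last block. *)
Lemma P_no_reliable_block_cylinder l N J F b :
  uniq F -> (forall p, p \in F -> (N + J * l <= p.1)%N) ->
  P (no_reliable_block X l N J `&` cylinder X F b) =
  (((1 - block_reliability l) ^+ J)%:E * P (cylinder X F b))%E.
Proof.
elim: J F b => [|J IHJ] F b F_uniq F_late.
  by rewrite no_reliable_block0 setTI expr0 mul1e.
set B := block_links E l (N + J * l).
have F_B : forall p, p \in F -> p \notin B.
  move=> p /F_late Fp; apply/negP => /mem_block_links.
  by move: Fp; rewrite mulSn; lia.
have F_late' : forall p, p \in F -> (N + J * l <= p.1)%N.
  by move=> p /F_late; apply: leq_trans; rewrite leq_add2l leq_mul2r leqnSn orbT.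
set bB := fun p => if p \in B then true else b p.
have FB_late : forall p, p \in F ++ B -> (N + J * l <= p.1)%N.
  by move=> p; rewrite mem_cat => /orP[/F_late' //|/mem_block_links /andP[]].
have FB_uniq : uniq (F ++ B).
  rewrite cat_uniq F_uniq block_links_uniq andbT; apply/hasPn => p Bp.
  by apply/negP => /F_B; rewrite Bp.
set No := no_reliable_block X l N J; set C := cylinder X F b; set V := cylinder X (F ++ B) bB.
have mNo : measurable No by apply: measurable_no_reliable_block.
have mC : measurable C by apply: measurable_cylinder.
have V_sub : V `<=` C by rewrite /V cylinder_cat // => t [].
have -> : no_reliable_block X l N J.+1 `&` C = (No `&` C) `\` (No `&` V).
  rewrite no_reliable_blockS /V cylinder_cat //; apply/seteqP; split => t /=.
  - by move=> [[No_t nB] C_t]; split => // -[_ []].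
  - by move=> [[No_t C_t] nV]; split => //; split => // B_t; apply: nV.
have P_diff : P ((No `&` C) `\` (No `&` V)) = (P (No `&` C) - P (No `&` V))%E.
  rewrite measureD ?(setIidr (@setIS _ No _ _ V_sub)) //; first exact: measurableI.
    exact/measurableI/measurable_cylinder.
  by rewrite (le_lt_trans (probability_le1 P (measurableI _ _ mNo mC))) ?ltry.
rewrite P_diff !IHJ // P_cylinder_cat ?block_links_uniq //.
rewrite P_reliable_block -(fineK (fin_num_measure P _ mC)) -!EFinM -EFinB.
by congr EFin; rewrite exprS; ring.
Qed.

Lemma P_no_reliable_block l N J :
  P (no_reliable_block X l N J) = ((1 - block_reliability l) ^+ J)%:E.
Proof.
rewrite -(setIT (no_reliable_block X l N J)) -(cylinder_nil X (fun=> true)).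
rewrite P_no_reliable_block_cylinder //.
by rewrite cylinder_nil probability_setT mule1.
Qed.

End BlockProbabilities.

Lemma le0_of_le_geometric (R : realType) (r x : R) :
  0 <= r < 1 -> (forall J, x <= r ^+ J) -> x <= 0.
Proof.
move=> /andP[r_ge0 r_lt1] x_le.
have r_cvg : (GRing.exp r : R ^nat) J @[J --> \oo] --> 0.
  by apply: cvg_expr; rewrite ger0_norm.
by apply: (cvgr_to_ge r_cvg); near=> J; apply: x_le.
Unshelve. all: by end_near.
Qed.

Lemma probability_bigcap_eq1 d (T : measurableType d) (R : realType)
    (P : probability T R) (U : (set T)^nat) :
  (forall N, measurable (U N)) -> (forall N, P (~` U N) = 0%E) ->
  P (\bigcap_N U N) = 1%E.
Proof.
move=> mU PU0.
have [A [mA PA0 sub_A]] : P.-negligible (\bigcup_N ~` U N).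
  apply: negligible_bigcup => N; exists (~` U N).
  by split; [exact: measurableC | exact: PU0 | by []].
have mI : measurable (\bigcap_N U N) by apply: bigcapT_measurable.
rewrite -[X in P X]setCK probability_setC; last exact: measurableC.
suff -> : P (~` \bigcap_N U N) = 0%E by rewrite sube0.
apply/eqP; rewrite eq_le measure_ge0 andbT -PA0 le_measure ?inE //.
  exact: measurableC.
by rewrite setC_bigcap.
Qed.

Section Recurrence.
Variables (R : realType) (m : nat) (E : {set 'I_m * 'I_m}).
Variables (d : measure_display) (T : measurableType d) (P : probability T R).
Variables (q : edge_t E -> R) (X : nat -> T -> {ffun edge_t E -> bool}).
Variables (z0 : idx E -> R) (mu : R) (l : nat) (i : 'I_m).
Hypotheses (self_loops : forall i : 'I_m, (i, i) \in E) (q01 : forall e, 0 < q e <= 1).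
Hypotheses (X_measurable : forall k e, measurable [set t | X k t e])
  (P_X : forall k e, P [set t | X k t e] = (q e)%:E) (X_indep : indep_links P X).
Hypotheses (z0_ge0 : forall a, 0 <= z0 a)
  (reach_i : forall a, pos_path (Mmat R (E:=E)) (nseq l (all_reliable E)) a (inl i))
  (mu_le : mu <= cmin R E ^+ l * \sum_a z0 a).

Let above k := [set t | mu <= zseq z0 (X^~ t) k (inl i)].
Let above_after N := \bigcup_(k in [set k | (N <= k)%N]) above k.

Lemma measurable_above k : measurable (above k).
Proof.
apply: (measurable_prefix_event X_measurable (k := k)
  (Q := fun f => mu <= zseq z0 f k (inl i))) => f g fg.
by rewrite (eq_zseq _ fg).
Qed.

Lemma P_not_above_after N : P (~` above_after N) = 0%E.
Proof.
have p_gt0 : 0 < block_reliability q l.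
  by apply: prodr_gt0 => r _; case/andP: (q01 r.2).
have p_le1 : block_reliability q l <= 1.
  by apply: prodr_ile1 => r _; case/andP: (q01 r.2) => /ltW -> ->.
have m_not : measurable (~` above_after N).
  by apply/measurableC/bigcup_measurable => k _; apply: measurable_above.
rewrite -(fineK (fin_num_measure P _ m_not)); congr EFin; apply/eqP.
rewrite eq_le fine_ge0 ?measure_ge0 // andbT.
apply: (@le0_of_le_geometric _ (1 - block_reliability q l)).
  by rewrite subr_ge0 p_le1 ltrBlDr ltrDl.
move=> J; rewrite -lee_fin fineK ?(fin_num_measure P _ m_not) //.
rewrite -(P_no_reliable_block X_measurable P_X X_indep l N J) le_measure ?inE //.
  exact: measurable_no_reliable_block.
move=> t not_above j _ reliable; apply: not_above.
exists (N + j * l + l)%N; first by rewrite /= -addnA leq_addr.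
apply: le_trans mu_le _; apply: zseq_after_reliable_block => //.
exact: reliable_blockP.
Qed.

Lemma P_above_infinitely_often :
  P [set t | forall N, exists2 k, (N <= k)%N & mu <= zseq z0 (X^~ t) k (inl i)] = 1%E.
Proof.
have m_after N : measurable (above_after N).
  by apply: bigcup_measurable => k _; apply: measurable_above.
rewrite -(probability_bigcap_eq1 m_after P_not_above_after); congr (P _).
apply/seteqP; split => t h N => [_|].
  by have [k Nk above_k] := h N; exists k.
by have [k Nk above_k] := h N I; exists k.
Qed.

End Recurrence.

Theorem lemma4 (R : realType) (m : nat) (E : {set 'I_m * 'I_m})
  (d : measure_display) (T : measurableType d) (P : probability T R)
  (q : edge_t E -> R) (X : nat -> T -> {ffun edge_t E -> bool})
  (z0 : idx E -> R) (mu_z : R) (l : nat) :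
  (forall i : 'I_m, (i, i) \in E) ->
  (forall i j : 'I_m, connect (fun u v => (u, v) \in E) i j) ->
  (forall e, 0 < q e <= 1) ->
  (* X k t e : reliability of link e at time step k+1 *)
  (forall k e, measurable [set t | X k t e]) ->
  (forall k e, P [set t | X k t e] = (q e)%:E) ->
  indep_links P X ->
  (forall i : 'I_m, 0 <= z0 (inl i)) ->
  (forall e : edge_t E, z0 (inr e) = 0) ->
  0 < \sum_(a : idx E) z0 a ->
  0 < mu_z -> mu_z <= \sum_(a : idx E) z0 a ->
  (0 < l)%N ->
  (forall i : 'I_m, exists s : seq {ffun edge_t E -> bool},
      size s = l /\
      forall a : idx E, 0 < mprod [seq Mmat R x | x <- s] a (inl i)) ->
  forall i : 'I_m,
    P [set t | forall N : nat, exists2 k : nat, (N <= k)%N &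
         mu_z * cmin R E ^+ l / #|idx E|%:R <= zseq z0 (X^~ t) k (inl i)] = 1%E.
Proof.
move=> self_loops _ q01 X_measurable P_X X_indep z0_node z0_link _ mu_z_gt0 mu_z_le _ reach_l i.
have z0_ge0 a : 0 <= z0 a by case: a => [u|e]; rewrite ?z0_link.
have reach_i a : pos_path (Mmat R (E:=E)) (nseq l (all_reliable E)) a (inl i).
  have [s [<- s_pos]] := reach_l i.
  exact/pos_path_all_reliable/(mprod_gt0_pos_path (@Mmat_ge0 R m E)).
apply: (P_above_infinitely_often self_loops q01 X_measurable P_X X_indep z0_ge0 reach_i).
have cl_ge0 : 0 <= cmin R E ^+ l by rewrite exprn_ge0 ?cmin_ge0.
have card_ge1 : 1 <= #|idx E|%:R :> R by rewrite ler1n; apply/card_gt0P; exists (inl i).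
rewrite ler_pdivrMr ?(lt_le_trans ltr01) //.
apply: (@le_trans _ _ (cmin R E ^+ l * \sum_a z0 a)); first by rewrite mulrC ler_wpM2l.
rewrite ler_peMr // mulr_ge0 //.
by apply: sumr_ge0 => a _; apply: z0_ge0.
Qed.
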